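(* Let $g:A\to Y$ and $h:B\to Y$ be injective relations. Every synchronisation $\sigma$ of $(g,h)$ is the disjoint union of the paths it contains: $\sigma=\bigcup\{\gamma\subseteq\sigma:\gamma\text{ is a path}\}$, the paths in this union being pairwise disjoint; in particular every element of $\sigma$ (viewed as a subset of $A+B$) lies in a unique path, and that path is contained in $\sigma$.
   Context: A binary relation $R:A\to Z$ is injective if $aRz$ and $a'Rz$ imply $a=a'$; for $\alpha\subseteq A$, $R(\alpha)=\{z: aRz\text{ for some }a\in\alpha\}$. Given injective relations $g:A\to Y$ and $h:B\to Y$, a synchronisation is a pair $\langle\alpha,\beta\rangle$ with $\alpha\subseteq A$, $\beta\subseteq B$ and $g(\alpha)=h(\beta)$; such pairs are identified with subsets $\alpha+\beta$ of the disjoint union $A+B$, and inclusion, intersection, union and emptiness are taken via this identification. A path is a non-empty synchronisation that is minimal with respect to inclusion among non-empty synchronisations. *)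

Set Implicit Arguments.

Definition injective_rel {A Z : Type} (R : A -> Z -> Prop) : Prop :=
  forall (a a' : A) (z : Z), R a z -> R a' z -> a = a'.

Definition rimage {A Z : Type} (R : A -> Z -> Prop) (alpha : A -> Prop) : Z -> Prop :=
  fun z => exists a, alpha a /\ R a z.

(* Subsets of the disjoint union A + B; alpha + beta corresponds to S with
   alpha = S o inl and beta = S o inr. *)
Definition left_part {A B : Type} (S : A + B -> Prop) : A -> Prop := fun a => S (inl a).
Definition right_part {A B : Type} (S : A + B -> Prop) : B -> Prop := fun b => S (inr b).

Definition set_eq {X : Type} (S T : X -> Prop) : Prop := forall x, S x <-> T x.
Definition set_incl {X : Type} (S T : X -> Prop) : Prop := forall x, S x -> T x.
Definition set_nonempty {X : Type} (S : X -> Prop) : Prop := exists x, S x.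

Definition synchronisation {A B Y : Type} (g : A -> Y -> Prop) (h : B -> Y -> Prop)
  (S : A + B -> Prop) : Prop :=
  set_eq (rimage g (left_part S)) (rimage h (right_part S)).

Definition is_path {A B Y : Type} (g : A -> Y -> Prop) (h : B -> Y -> Prop)
  (S : A + B -> Prop) : Prop :=
  synchronisation g h S /\ set_nonempty S /\
  (forall T, synchronisation g h T -> set_nonempty T -> set_incl T S -> set_eq T S).

From Stdlib Require Import Classical.

(* Join a in A and b in B by an edge when g a y and h b y for some
   y, and call a subset of A + B closed when it never separates the two ends of
   an edge.  By injectivity of g and h every synchronisation is closed, and a
   closed subset of a synchronisation is again a synchronisation.  The
   component of x, the intersection of all closed sets containing x, is the
   least closed set containing x.  Hence, inside a synchronisation sigma:
   - the component of any x in sigma is a path contained in sigma, since a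
     non-empty synchronisation T inside it must contain x (otherwise the closed
     complement of T would contain x but not the whole component);
   - any path containing x is its component, by minimality. *)

Set Implicit Arguments.

Section Components.
Variables (A B Y : Type) (g : A -> Y -> Prop) (h : B -> Y -> Prop).

Definition linked (u v : A + B) : Prop :=
  match u, v with
  | inl a, inr b => exists y, g a y /\ h b y
  | _, _ => False
  end.

Definition closed (S : A + B -> Prop) : Prop :=
  forall u v, linked u v -> (S u <-> S v).

Definition component (x : A + B) : A + B -> Prop :=
  fun z => forall S, closed S -> S x -> S z.

Lemma component_self x : component x x.
Proof. intros S _ Sx; exact Sx. Qed.

Lemma component_closed x : closed (component x).
Proof.
  intros u v Huv; split; intros Hz S HS Sx; specialize (Hz S HS Sx);
    apply (HS u v Huv); exact Hz.
Qed.

Lemma component_least {S x} : closed S -> S x -> set_incl (component x) S.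
Proof. intros HS Sx z Hz; exact (Hz S HS Sx). Qed.

(* Complements of closed sets are closed; this lets minimality arguments
   locate x inside any closed set meeting its component. *)
Lemma closed_compl {S} : closed S -> closed (fun z => ~ S z).
Proof. intros HS u v Huv; pose proof (HS u v Huv); tauto. Qed.

Lemma closed_meets_component {S x t} :
  closed S -> S t -> component x t -> S x.
Proof.
  intros HS St Ct; apply NNPP; intro NSx.
  exact (Ct _ (closed_compl HS) NSx St).
Qed.

(* A closed subset of a synchronisation is a synchronisation: the partner of
   one of its points, found in the ambient synchronisation, is linked to it. *)
Lemma closed_sub_sync {S T} :
  synchronisation g h S -> closed T -> set_incl T S -> synchronisation g h T.
Proof.
  intros HS HT Hinc y; split.
  - intros [a [Ta Ga]].
    destruct (proj1 (HS y) (ex_intro _ a (conj (Hinc _ Ta) Ga))) as [b [_ Hb]].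
    exists b; split; [|exact Hb].
    apply (proj1 (HT (inl a) (inr b) (ex_intro _ y (conj Ga Hb)))); exact Ta.
  - intros [b [Tb Hb]].
    destruct (proj2 (HS y) (ex_intro _ b (conj (Hinc _ Tb) Hb))) as [a [_ Ga]].
    exists a; split; [|exact Ga].
    apply (proj2 (HT (inl a) (inr b) (ex_intro _ y (conj Ga Hb)))); exact Tb.
Qed.

Hypothesis Hg : injective_rel g.
Hypothesis Hh : injective_rel h.

(* For injective g and h, every synchronisation is closed: the unique partner
   across an edge must belong to it. *)
Lemma sync_closed {S} : synchronisation g h S -> closed S.
Proof.
  intros HS [a|b] [a'|b'] Huv; simpl in Huv; try contradiction.
  destruct Huv as [y [Ga Hb]]; split; intro Hs.
  - destruct (proj1 (HS y) (ex_intro _ a (conj Hs Ga))) as [b0 [Sb0 Hb0]].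
    rewrite (Hh Hb Hb0); exact Sb0.
  - destruct (proj2 (HS y) (ex_intro _ b' (conj Hs Hb))) as [a0 [Sa0 Ga0]].
    rewrite (Hg Ga Ga0); exact Sa0.
Qed.

Lemma component_sub_sync {S x} :
  synchronisation g h S -> S x -> set_incl (component x) S.
Proof. intros HS Sx; exact (component_least (sync_closed HS) Sx). Qed.

Lemma component_sync {S x} :
  synchronisation g h S -> S x -> synchronisation g h (component x).
Proof.
  intros HS Sx.
  exact (closed_sub_sync HS (component_closed x) (component_sub_sync HS Sx)).
Qed.

Lemma component_path {S x} :
  synchronisation g h S -> S x -> is_path g h (component x).
Proof.
  intros HS Sx; split; [exact (component_sync HS Sx)|].
  split; [exists x; apply component_self|].
  intros T HT [t Tt] Hinc z; split; [apply Hinc|].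
  pose proof (closed_meets_component (sync_closed HT) Tt (Hinc t Tt)) as Tx.
  intro Cz; exact (component_sub_sync HT Tx Cz).
Qed.

Lemma path_is_component {gamma x} :
  is_path g h gamma -> gamma x -> set_eq gamma (component x).
Proof.
  intros [Hsync [_ Hmin]] Gx z.
  assert (E : set_eq (component x) gamma).
  { apply Hmin; [exact (component_sync Hsync Gx)|exists x; apply component_self|].
    exact (component_sub_sync Hsync Gx). }
  specialize (E z); tauto.
Qed.

Lemma paths_meeting_eq {gamma1 gamma2 x} :
  is_path g h gamma1 -> is_path g h gamma2 -> gamma1 x -> gamma2 x ->
  set_eq gamma1 gamma2.
Proof.
  intros P1 P2 G1 G2 z.
  pose proof (path_is_component P1 G1 z); pose proof (path_is_component P2 G2 z).
  tauto.
Qed.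

End Components.

Theorem mainTheorem8 (A B Y : Type) (g : A -> Y -> Prop) (h : B -> Y -> Prop)
  (Hg : injective_rel g) (Hh : injective_rel h)
  (sigma : A + B -> Prop) (Hsigma : synchronisation g h sigma) :
  (* sigma is the union of the paths it contains *)
  (forall x, sigma x <->
     exists gamma, is_path g h gamma /\ set_incl gamma sigma /\ gamma x) /\
  (* the paths contained in sigma are pairwise disjoint (distinct => disjoint) *)
  (forall gamma1 gamma2,
     is_path g h gamma1 -> set_incl gamma1 sigma ->
     is_path g h gamma2 -> set_incl gamma2 sigma ->
     set_eq gamma1 gamma2 \/ (forall x, ~ (gamma1 x /\ gamma2 x))) /\
  (* every element of sigma lies in a unique path, contained in sigma *)
  (forall x, sigma x ->
     exists gamma, is_path g h gamma /\ gamma x /\ set_incl gamma sigma /\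
       (forall gamma', is_path g h gamma' -> gamma' x -> set_eq gamma' gamma)).
Proof.
  split; [|split].
  - intro x; split.
    + intro Sx; exists (component g h x).
      split; [exact (component_path Hg Hh Hsigma Sx)|].
      split; [exact (component_sub_sync Hg Hh Hsigma Sx)|apply component_self].
    + intros [gamma [_ [Hinc Gx]]]; exact (Hinc x Gx).
  - intros gamma1 gamma2 P1 _ P2 _.
    destruct (classic (exists x, gamma1 x /\ gamma2 x)) as [[x [G1 G2]]|Disj].
    + left; exact (paths_meeting_eq Hg Hh P1 P2 G1 G2).
    + right; intros x Hx; apply Disj; exists x; exact Hx.
  - intros x Sx; exists (component g h x).
    split; [exact (component_path Hg Hh Hsigma Sx)|].
    split; [apply component_self|].
    split; [exact (component_sub_sync Hg Hh Hsigma Sx)|].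
    intros gamma P Gx; exact (path_is_component Hg Hh P Gx).
Qed.
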